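(* Let $G$ be an abelian group with $\mathbb{Z}^{(\omega)}\subseteq G\subseteq\mathbb{Z}^\omega$ and $|G|<\mathfrak{p}$. Then $G$ is not weakly $\mathbb{Z}^{(\omega)}$-binding; that is, there is a homomorphism $G\to\mathbb{Z}^{(\omega)}$ that extends to an endomorphism of $\mathbb{Z}^\omega$ and maps $\mathbb{Z}^{(\omega)}$ onto a group of infinite rank.
   Context: $\mathbb{Z}^{\omega}$ is the product of countably many copies of $\mathbb{Z}$; $\mathbb{Z}^{(\omega)}\subseteq\mathbb{Z}^\omega$ is the subgroup of finitely supported sequences. Rank means torsion-free rank. $G$ with $\mathbb{Z}^{(\omega)}\subseteq G\subseteq\mathbb{Z}^\omega$ is weakly $\mathbb{Z}^{(\omega)}$-binding if every homomorphism $G\to\mathbb{Z}^{(\omega)}$ that extends to an endomorphism of $\mathbb{Z}^\omega$ maps $\mathbb{Z}^{(\omega)}$ to a group of finite rank. $\mathfrak{p}$ is the pseudointersection number: the smallest cardinality of a family $\mathcal F$ of subsets of $\omega$ such that every finite subfamily has infinite intersection but there is no infinite $A\subseteq\omega$ with $A\setminus F$ finite for all $F\in\mathcal F$. *)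

(* Z^omega = nat -> Z (all integer sequences). *)
From Stdlib Require Import ZArith List.
Import ListNotations.
Open Scope Z_scope.

Definition seqZ := nat -> Z.
Definition set_nat := nat -> Prop.

Definition sadd (x y : seqZ) : seqZ := fun n => x n + y n.
Definition sopp (x : seqZ) : seqZ := fun n => - x n.
Definition szero : seqZ := fun _ => 0.
Definition sscale (c : Z) (x : seqZ) : seqZ := fun n => c * x n.

(* Z^(omega): finitely supported sequences *)
Definition finsupp (x : seqZ) : Prop := exists N : nat, forall n, (N <= n)%nat -> x n = 0.

Definition subgroup (G : seqZ -> Prop) : Prop :=
  G szero /\ (forall x y, G x -> G y -> G (sadd x y)) /\ (forall x, G x -> G (sopp x)).

Definition additive (phi : seqZ -> seqZ) : Prop :=
  forall x y, phi (sadd x y) = sadd (phi x) (phi y).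

Fixpoint lincomb (cs : list Z) (xs : list seqZ) : seqZ :=
  match cs, xs with
  | c :: cs', x :: xs' => sadd (sscale c x) (lincomb cs' xs')
  | _, _ => szero
  end.

Definition lin_indep (xs : list seqZ) : Prop :=
  forall cs : list Z, length cs = length xs ->
    lincomb cs xs = szero -> Forall (fun c => c = 0) cs.

Definition infinite_rank (H : seqZ -> Prop) : Prop :=
  forall n : nat, exists xs : list seqZ,
    length xs = n /\ Forall H xs /\ lin_indep xs.

Definition image_finsupp (phi : seqZ -> seqZ) : seqZ -> Prop :=
  fun y => exists x, finsupp x /\ phi x = y.

Definition weakly_binding (G : seqZ -> Prop) : Prop :=
  forall phi : seqZ -> seqZ, additive phi ->
    (forall x, G x -> finsupp (phi x)) ->
    ~ infinite_rank (image_finsupp phi).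

Definition infinite_set (A : set_nat) : Prop := forall n, exists m, (n <= m)%nat /\ A m.

Definition sfip {I : Type} (F : I -> set_nat) : Prop :=
  forall l : list I, infinite_set (fun m => Forall (fun i => F i m) l).

Definition has_pseudointersection {I : Type} (F : I -> set_nat) : Prop :=
  exists A : set_nat, infinite_set A /\
    forall i, exists N : nat, forall m, (N <= m)%nat -> A m -> F i m.

(* |G| < p : every family of subsets of omega of cardinality <= |G|
   (indexed by a type injecting into G) with the SFIP has a pseudointersection *)
Definition card_lt_p (G : seqZ -> Prop) : Prop :=
  forall (I : Type) (F : I -> set_nat),
    (exists f : I -> seqZ, (forall i, G (f i)) /\
        (forall i j, (forall n, f i n = f j n) -> i = j)) ->
    sfip F -> has_pseudointersection F.

From Stdlib Require Import ZArith List Lia Cantor.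
From Stdlib Require Import FunctionalExtensionality ProofIrrelevance IndefiniteDescription.
Import ListNotations.
Open Scope Z_scope.

(* A block is a position N with a nonzero coefficient list l; it acts on Z^omega
   by x |-> sum_k l_k x_(N+k).  Blocks are coded by natural numbers, and each
   g in G yields the set of codes of blocks that annihilate g.  Finitely many
   sequences always have a common annihilating block beyond any position, so this
   family has the strong finite intersection property, and since |G| < p it has
   a pseudointersection A.  Picking from A blocks with pairwise disjoint supports,
   the map phi(x)_j = <block_j, x> is an endomorphism of Z^omega killing each
   g in G in almost all coordinates, while it sends a suitable unit vector inside
   the j-th block to a nonzero multiple of e_j, so phi(Z^(omega)) has infinite
   rank. *)

Definition encode_Z (z : Z) : nat := Cantor.to_nat (Z.to_nat z, Z.to_nat (- z)).

Definition decode_Z (n : nat) : Z :=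
  let (p, q) := Cantor.of_nat n in Z.of_nat p - Z.of_nat q.

Lemma decode_encode_Z (z : Z) : decode_Z (encode_Z z) = z.
Proof. unfold decode_Z, encode_Z. rewrite Cantor.cancel_of_to. lia. Qed.

Fixpoint encode_list (l : list Z) : nat :=
  match l with
  | [] => 0
  | a :: l' => S (Cantor.to_nat (encode_Z a, encode_list l'))
  end.

(* The tail of a list has a smaller code, so [fuel >= n] suffices. *)
Fixpoint decode_list (fuel n : nat) : list Z :=
  match fuel, n with
  | S fuel', S n' => let (a, c) := Cantor.of_nat n' in decode_Z a :: decode_list fuel' c
  | _, _ => []
  end.

Lemma decode_encode_list (l : list Z) (fuel : nat) :
  (encode_list l <= fuel)%nat -> decode_list fuel (encode_list l) = l.
Proof.
  revert fuel; induction l as [|a l IH]; intros [|fuel] Hfuel;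
    cbn [encode_list decode_list] in *; try easy; try lia.
  rewrite Cantor.cancel_of_to, decode_encode_Z, IH; [easy|].
  pose proof (Cantor.to_nat_non_decreasing (encode_Z a) (encode_list l)). lia.
Qed.

Definition encode_block (N : nat) (l : list Z) : nat := Cantor.to_nat (N, encode_list l).

Definition decode_block (m : nat) : nat * list Z :=
  let (N, c) := Cantor.of_nat m in (N, decode_list c c).

Lemma decode_encode_block (N : nat) (l : list Z) : decode_block (encode_block N l) = (N, l).
Proof.
  unfold decode_block, encode_block. rewrite Cantor.cancel_of_to, decode_encode_list; auto.
Qed.

Lemma encode_block_ge (N : nat) (l : list Z) : (N <= encode_block N l)%nat.
Proof. pose proof (Cantor.to_nat_non_decreasing N (encode_list l)). unfold encode_block. lia. Qed.

Fixpoint block_dot (N : nat) (l : list Z) (x : seqZ) : Z :=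
  match l with
  | [] => 0
  | a :: l' => a * x N + block_dot (S N) l' x
  end.

Lemma block_dot_app (N : nat) (u v : list Z) (x : seqZ) :
  block_dot N (u ++ v) x = block_dot N u x + block_dot (N + length u) v x.
Proof.
  revert N; induction u as [|a u IH]; intros N; cbn.
  - rewrite Nat.add_0_r. lia.
  - rewrite IH, Nat.add_succ_comm. lia.
Qed.

Lemma block_dot_scale (N : nat) (a : Z) (l : list Z) (x : seqZ) :
  block_dot N (map (Z.mul a) l) x = a * block_dot N l x.
Proof. revert N; induction l as [|b l IH]; intros N; cbn; rewrite ?IH; lia. Qed.

Lemma block_dot_sadd (N : nat) (l : list Z) (x y : seqZ) :
  block_dot N l (sadd x y) = block_dot N l x + block_dot N l y.
Proof. revert N; induction l as [|b l IH]; intros N; cbn; rewrite ?IH; unfold sadd; lia. Qed.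

Definition unit_seq (t : nat) : seqZ := fun n => if Nat.eqb n t then 1 else 0.

Lemma finsupp_unit_seq (t : nat) : finsupp (unit_seq t).
Proof.
  exists (S t). intros n Hn. unfold unit_seq.
  destruct (Nat.eqb_spec n t); [lia | reflexivity].
Qed.

Lemma block_dot_unit_seq_outside (N t : nat) (l : list Z) :
  (t < N \/ N + length l <= t)%nat -> block_dot N l (unit_seq t) = 0.
Proof.
  revert N; induction l as [|b l IH]; intros N Ht; cbn in *; [reflexivity|].
  rewrite IH by lia. unfold unit_seq.
  destruct (Nat.eqb_spec N t); [lia | ring].
Qed.

Lemma block_dot_unit_seq_inside (N p : nat) (l : list Z) :
  (p < length l)%nat -> block_dot N l (unit_seq (N + p)) = nth p l 0.
Proof.
  revert N p; induction l as [|b l IH]; intros N [|p] Hp; cbn in *; try lia.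
  - rewrite block_dot_unit_seq_outside by lia.
    unfold unit_seq. rewrite Nat.add_0_r, Nat.eqb_refl. ring.
  - rewrite <- Nat.add_succ_comm, IH by lia.
    unfold unit_seq. destruct (Nat.eqb_spec N (S N + p)); [lia | ring].
Qed.

Definition nonzero_list (l : list Z) : Prop := exists p, (p < length l)%nat /\ nth p l 0 <> 0.

Lemma exists_block_annihilator (gs : list seqZ) (N : nat) :
  exists l, nonzero_list l /\ Forall (fun g => block_dot N l g = 0) gs.
Proof.
  revert N; induction gs as [|g gs IH]; intros N.
  - exists [1]. split; [exists 0%nat; cbn; split; lia | constructor].
  - destruct (IH N) as [u [Hu Hgs_u]].
    destruct (Z.eq_dec (block_dot N u g) 0) as [Hg_u | Hg_u].
    { exists u. split; [exact Hu | constructor; assumption]. }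
    destruct (IH (N + length u)%nat) as [v [[p [Hp Hvp]] Hgs_v]].
    set (du := block_dot N u g). set (dv := block_dot (N + length u) v g).
    (* the combination dv * u - du * v of the two adjacent blocks also kills g *)
    exists (map (Z.mul dv) u ++ map (Z.mul (- du)) v). split.
    + exists (length u + p)%nat. rewrite length_app, !length_map. split; [lia|].
      rewrite app_nth2, length_map, Nat.add_comm, Nat.add_sub by (rewrite length_map; lia).
      rewrite (nth_indep _ 0 (Z.mul (- du) 0)), map_nth by (rewrite length_map; lia).
      intros Hzero. apply Z.mul_eq_0 in Hzero. lia.
    + rewrite Forall_forall in Hgs_u, Hgs_v.
      constructor; [|apply Forall_forall; intros h Hh];
        rewrite block_dot_app, length_map, !block_dot_scale; fold du dv.
      * lia.
      * rewrite Hgs_u, Hgs_v by assumption. lia.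
Qed.

Lemma lincomb_diagonal (y : nat -> seqZ) (a : nat -> Z)
    (Hy : forall j k, y j k = if Nat.eqb j k then a j else 0) (cs : list Z) (s k : nat) :
  lincomb cs (map y (seq s (length cs))) k =
    if (k <? s)%nat then 0 else nth (k - s) cs 0 * a k.
Proof.
  revert s; induction cs as [|c cs IH]; intros s; cbn -[Nat.ltb].
  - unfold szero. destruct (k <? s)%nat, (k - s)%nat; reflexivity.
  - unfold sadd, sscale. rewrite IH, Hy.
    destruct (Nat.ltb_spec k s), (Nat.ltb_spec k (S s)), (Nat.eqb_spec s k); try lia.
    + subst. rewrite Nat.sub_diag. ring.
    + replace (k - s)%nat with (S (k - S s)) by lia. ring.
Qed.

Lemma lin_indep_diagonal (y : nat -> seqZ) (a : nat -> Z)
    (Hy : forall j k, y j k = if Nat.eqb j k then a j else 0) (Ha : forall j, a j <> 0) (n : nat) :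
  lin_indep (map y (seq 0 n)).
Proof.
  intros cs Hlen Hzero. rewrite length_map, length_seq in Hlen. subst n.
  apply Forall_forall. intros c Hc. apply In_nth with (d := 0) in Hc as [i [Hi <-]].
  pose proof (lincomb_diagonal y a Hy cs 0 i) as Hi_coord.
  rewrite Hzero, Nat.sub_0_r in Hi_coord. cbn in Hi_coord.
  symmetry in Hi_coord. apply Z.mul_eq_0 in Hi_coord as [|Hai]; [assumption|].
  now destruct (Ha i).
Qed.

Definition block_map (N : nat -> nat) (L : nat -> list Z) (x : seqZ) : seqZ :=
  fun j => block_dot (N j) (L j) x.

Definition disjoint_blocks (N : nat -> nat) (L : nat -> list Z) : Prop :=
  forall j, (N j + length (L j) <= N (S j))%nat.

Lemma block_map_additive (N : nat -> nat) (L : nat -> list Z) : additive (block_map N L).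
Proof.
  intros x y. apply functional_extensionality. intros j. apply block_dot_sadd.
Qed.

Lemma disjoint_blocks_lt (N : nat -> nat) (L : nat -> list Z) :
  disjoint_blocks N L -> forall j k, (j < k)%nat -> (N j + length (L j) <= N k)%nat.
Proof.
  intros Hdisj j k Hjk. induction Hjk as [|k Hjk IH]; [apply Hdisj|].
  specialize (Hdisj k). lia.
Qed.

Lemma block_map_unit_seq (N : nat -> nat) (L : nat -> list Z) (j p k : nat) :
  disjoint_blocks N L -> (p < length (L j))%nat ->
  block_map N L (unit_seq (N j + p)) k = if Nat.eqb j k then nth p (L j) 0 else 0.
Proof.
  intros Hdisj Hp. unfold block_map.
  destruct (Nat.eqb_spec j k) as [<- | Hjk].
  - apply block_dot_unit_seq_inside, Hp.
  - apply block_dot_unit_seq_outside.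
    destruct (proj1 (Nat.lt_gt_cases j k) Hjk) as [Hlt | Hlt];
      pose proof (disjoint_blocks_lt N L Hdisj _ _ Hlt); lia.
Qed.

Lemma block_map_infinite_rank (N : nat -> nat) (L : nat -> list Z) :
  (forall j, nonzero_list (L j)) -> disjoint_blocks N L ->
  infinite_rank (image_finsupp (block_map N L)).
Proof.
  intros Hnz Hdisj n.
  destruct (functional_choice _ Hnz) as [p Hp].
  set (y := fun j => block_map N L (unit_seq (N j + p j))).
  exists (map y (seq 0 n)). split; [|split].
  - now rewrite length_map, length_seq.
  - apply Forall_forall. intros z Hz. apply in_map_iff in Hz as [j [<- _]].
    exists (unit_seq (N j + p j)). split; [apply finsupp_unit_seq | reflexivity].
  - apply (lin_indep_diagonal y (fun j => nth (p j) (L j) 0)).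
    + intros j k. apply block_map_unit_seq, Hp. exact Hdisj.
    + intros j. apply Hp.
Qed.

Lemma infinite_set_chain (A : set_nat) (c : nat) (h : nat -> nat) :
  infinite_set A ->
  exists m : nat -> nat, forall j, A (m j) /\ (c + j <= m j)%nat /\ (h (m j) <= m (S j))%nat.
Proof.
  intros HA. destruct (functional_choice _ HA) as [pick Hpick].
  assert (Hpick_ge : forall n k, (k <= n)%nat -> (k <= pick n)%nat).
  { intros n k Hkn. pose proof (proj1 (Hpick n)). lia. }
  exists (fix m j := match j with
                     | O => pick c
                     | S j' => pick (Nat.max (c + j) (h (m j')))
                     end).
  intros [|j]; cbn -[Nat.max]; repeat split; try apply Hpick; apply Hpick_ge; lia.
Qed.

(* The bound [|g 0| <= N] is what pushes the blocks to the right: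
   the sequences (M, 0, 0, ...) lie in G. *)
Definition annihilating_code (g : seqZ) (m : nat) : Prop :=
  nonzero_list (snd (decode_block m)) /\
  (Z.to_nat (Z.abs (g 0%nat)) <= fst (decode_block m))%nat /\
  block_dot (fst (decode_block m)) (snd (decode_block m)) g = 0.

Lemma annihilating_code_sfip (I : Type) (f : I -> seqZ) :
  sfip (fun i => annihilating_code (f i)).
Proof.
  intros l n.
  set (bounds := map (fun i => Z.to_nat (Z.abs (f i 0%nat))) l).
  set (N0 := (n + list_max bounds)%nat).
  destruct (exists_block_annihilator (map f l) N0) as [v [Hv Hkill]].
  exists (encode_block N0 v). split; [pose proof (encode_block_ge N0 v); lia|].
  pose proof (proj1 (list_max_le bounds _) (le_n _)) as Hbounds.
  rewrite Forall_forall in *. intros i Hi.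
  unfold annihilating_code. rewrite decode_encode_block. cbn.
  split; [exact Hv|split].
  - enough (Z.to_nat (Z.abs (f i 0%nat)) <= list_max bounds)%nat by lia.
    apply Hbounds, in_map_iff. now exists i.
  - apply Hkill, in_map, Hi.
Qed.

Lemma proj1_sig_injection (G : seqZ -> Prop) :
  exists f : {g | G g} -> seqZ,
    (forall i, G (f i)) /\ (forall i j, (forall n, f i n = f j n) -> i = j).
Proof.
  exists (@proj1_sig _ _). split; [intros [g Hg]; exact Hg|].
  intros [g Hg] [h Hh] Hgh. cbn in Hgh.
  apply functional_extensionality in Hgh. subst h.
  f_equal. apply proof_irrelevance.
Qed.

Lemma exists_annihilating_blocks (G : seqZ -> Prop) :
  (forall x, finsupp x -> G x) -> card_lt_p G ->
  exists (N : nat -> nat) (L : nat -> list Z),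
    (forall j, nonzero_list (L j)) /\ disjoint_blocks N L /\
    (forall g, G g -> finsupp (block_map N L g)).
Proof.
  intros Hfin Hp.
  destruct (Hp _ _ (proj1_sig_injection G) (annihilating_code_sfip _ (@proj1_sig _ G)))
    as [A [HAinf HA]].
  destruct (functional_choice _ HA) as [thr Hthr].
  set (spike := fun M : nat => sscale (Z.of_nat M) (unit_seq 0)).
  assert (Hspike : forall M, G (spike M)).
  { intros M. apply Hfin. destruct (finsupp_unit_seq 0) as [K HK].
    exists K. intros k Hk. unfold spike, sscale. rewrite HK by exact Hk. ring. }
  assert (Hspike0 : forall M, Z.to_nat (Z.abs (spike M 0%nat)) = M).
  { intros M. unfold spike, sscale, unit_seq. cbn. rewrite Z.mul_1_r, Z.abs_eq; lia. }
  set (block_end := fun m => (fst (decode_block m) + length (snd (decode_block m)))%nat).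
  destruct (infinite_set_chain A (thr (exist G (spike 0%nat) (Hspike 0%nat)))
              (fun m => thr (exist G (spike (block_end m)) (Hspike _))) HAinf) as [m Hm].
  assert (Hcode : forall i j, (thr i <= m j)%nat -> annihilating_code (proj1_sig i) (m j)).
  { intros i j Hij. apply Hthr; [exact Hij | apply Hm]. }
  exists (fun j => fst (decode_block (m j))), (fun j => snd (decode_block (m j))).
  split; [|split].
  - intros j. apply (Hcode (exist G (spike 0%nat) (Hspike 0%nat))).
    pose proof (Hm j). lia.
  - intros j. destruct (Hcode _ (S j) (proj2 (proj2 (Hm j)))) as [_ [Hbound _]].
    cbn in Hbound. rewrite Hspike0 in Hbound. exact Hbound.
  - intros g Hg. exists (thr (exist G g Hg)). intros j Hj.
    apply (Hcode (exist G g Hg)). pose proof (Hm j). lia.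
Qed.

Theorem theorem9 (G : seqZ -> Prop) :
  subgroup G ->
  (forall x, finsupp x -> G x) ->
  card_lt_p G ->
  ~ weakly_binding G /\
  exists phi : seqZ -> seqZ, additive phi /\
    (forall x, G x -> finsupp (phi x)) /\
    infinite_rank (image_finsupp phi).
Proof.
  intros _ Hfin Hp.
  destruct (exists_annihilating_blocks G Hfin Hp) as [N [L [Hnz [Hdisj HG]]]].
  assert (Hphi : exists phi : seqZ -> seqZ, additive phi /\
            (forall x, G x -> finsupp (phi x)) /\ infinite_rank (image_finsupp phi)).
  { exists (block_map N L). split; [|split].
    - apply block_map_additive.
    - exact HG.
    - apply block_map_infinite_rank; assumption. }
  split; [|exact Hphi].
  intros Hbinding. destruct Hphi as [phi [Hadd [HGphi Hrank]]].
  exact (Hbinding phi Hadd HGphi Hrank).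
Qed.
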